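(* Let $T$ be a tree on $n$ vertices with costs $c:V(T)\to\mathbb{R}_{>0}$ normalized so that $\max_{v\in V(T)}c(v)=1$. Let $\mathcal{T}$ be a subtree of $T$ and let $0<a<b$ be such that $c(v)\le b$ for all $v\in V(\mathcal{T})$ and $2a\ge b$. Assume that either $b\le 1/\log n$, or $c(v)>a$ for every $v\in V(\mathcal{T})$. Let $D$ be the ranking-based decision tree of $\mathcal{T}$. Then $\texttt{COST}_D(\mathcal{T},c)\le 2\cdot\texttt{OPT}(T,c)$.
   Context: Search model: a query to $v$ costs $c(v)$ and returns either that $v$ is the target $x$ or the component of $T-v$ containing $x$. A decision tree for a tree $T$ is (recursively) a rooted tree whose root is a vertex $v$ of $T$ and whose root subtrees are decision trees for the components of $T-v$, one per component. $\texttt{COST}_D(T,c)$ is the maximum over $x\in V(T)$ of the total cost of the vertices on the root-to-$x$ path in $D$; $\texttt{OPT}(T,c)$ is the minimum cost over all decision trees for $T$. A vertex ranking of a tree is a labeling $l$ of its vertices by positive integers such that whenever $u\ne v$ and $l(u)=l(v)$, some vertex $z$ on the path strictly between $u$ and $v$ has $l(z)>l(v)$. The ranking-based decision tree of a tree $\mathcal{T}$ is obtained from a vertex ranking of $\mathcal{T}$ using the minimum possible number of distinct labels: query the unique vertex $z$ with largest label as the root, and below it attach, recursively, the decision trees so obtained (with the restricted labeling) for each component of $\mathcal{T}-z$. Logarithms are base 2. *)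

From HB Require Import structures.
From mathcomp Require Import all_boot all_order all_algebra.
From mathcomp Require Import reals exp.
Set Implicit Arguments. Unset Strict Implicit. Unset Printing Implicit Defensive.
Import Order.TTheory GRing.Theory Num.Theory.

Section Defs.
Variable V : finType.

Definition is_tree (adj : rel V) : Prop :=
  [/\ symmetric adj, irreflexive adj,
      (forall x y, connect adj x y) &
      (forall s : seq V, uniq s -> 2 < size s -> ~~ cycle adj s)].

Definition restr (adj : rel V) (A : {set V}) : rel V :=
  [rel x y | [&& x \in A, y \in A & adj x y]].

Definition is_subtree (adj : rel V) (S : {set V}) : Prop :=
  S != set0 /\ (forall x y, x \in S -> y \in S -> connect (restr adj S) x y).

Definition comps (adj : rel V) (A : {set V}) : {set {set V}} :=
  [set [set y in A | connect (restr adj A) x y] | x in A].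

Inductive dtree : Type := Node : V -> seq dtree -> dtree.

Fixpoint dverts (D : dtree) : seq V :=
  match D with Node v ch => v :: flatten (map dverts ch) end.

Definition dset (D : dtree) : {set V} := [set x | x \in dverts D].

(* Generic well-formedness: D is a decision tree for A (root in A, children
   are decision trees for the components of A - root, one per component),
   and every node v with current vertex set B satisfies [P v B]. *)
Fixpoint dtree_ok (adj : rel V) (P : V -> {set V} -> bool)
    (A : {set V}) (D : dtree) : bool :=
  match D with
  | Node v ch =>
    [&& v \in A, P v A,
        perm_eq (map dset ch) (enum (comps adj (A :\ v))) &
        all (fun d => dtree_ok adj P (dset d) d) ch]
  end.

Definition is_dtree (adj : rel V) (A : {set V}) (D : dtree) : bool :=
  dtree_ok adj (fun _ _ => true) A D.

Fixpoint dpath (D : dtree) (x : V) : seq V :=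
  match D with
  | Node v ch =>
    v :: (if v == x then [::]
          else flatten (map (fun d => if x \in dverts d then dpath d x else [::]) ch))
  end.

Definition dcost (R : realType) (c : V -> R) (A : {set V}) (D : dtree) : R :=
  \big[Num.max/0%R]_(x in A) (\sum_(u <- dpath D x) c u)%R.

(* vertex ranking of the subtree S (paths taken in the tree adj) *)
Definition is_ranking (adj : rel V) (S : {set V}) (l : V -> nat) : Prop :=
  (forall x, x \in S -> 0 < l x) /\
  (forall u v, u \in S -> v \in S -> u != v -> l u = l v ->
     exists (p : seq V) (z : V),
       [/\ path adj u p, last u p = v, uniq (u :: p),
           (z \in p) && (z != v) & l v < l z]).

Definition nlabels (S : {set V}) (l : V -> nat) : nat :=
  size (undup [seq l x | x <- enum S]).

Definition is_opt_ranking (adj : rel V) (S : {set V}) (l : V -> nat) : Prop :=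
  is_ranking adj S l /\
  (forall l', is_ranking adj S l' -> nlabels S l <= nlabels S l').

(* the ranking-based decision tree of S w.r.t. the ranking l: root is the
   (unique) vertex of largest label, recursively on components *)
Definition is_rank_dtree (adj : rel V) (l : V -> nat) (S : {set V}) (D : dtree)
  : bool :=
  dtree_ok adj (fun v B => [forall x in B, (x != v) ==> (l x < l v)]) S D.

End Defs.

(* Let k be the number of labels of an optimal ranking of the subtree S.
   Labels strictly decrease along every root-to-vertex path of the
   ranking-based decision tree D, so such a path has at most k vertices and
   COST_D(S) <= b k.
   Conversely, any decision tree D' of a connected vertex set containing S
   yields a ranking of S: if at most m vertices of S are queried on the way to
   each x in S, say d(x) of them, label x by m + 1 - d(x).  Two vertices of S
   with the same d are separated by a query of smaller d (or outside S) lying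
   on the path between them, namely the root of the smallest subtree of D'
   containing both.  Hence k <= m.
   If c > a on S, the path of D' to a vertex of S maximising d costs at least
   a m, so OPT >= a k >= b k / 2.  Otherwise b log n <= 1: centroid
   decomposition gives a decision tree of S of depth floor(log |S|) + 1, so
   COST_D(S) <= min(b, 1) (floor(log n) + 1) <= 2, while OPT >= 1 because some
   vertex has cost 1. *)

From HB Require Import structures.
From mathcomp Require Import all_boot all_order all_algebra.
From mathcomp Require Import reals exp.
From mathcomp Require Import zify lra.
Import Order.TTheory GRing.Theory Num.Theory.
Set Implicit Arguments. Unset Strict Implicit. Unset Printing Implicit Defensive.

Section InducedSubgraphs.
Variables (V : finType) (adj : rel V).
Hypothesis adj_sym : symmetric adj.
Implicit Types (A B K : {set V}) (u v w x y z : V).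

Definition component (B : {set V}) x := [set y in B | connect (restr adj B) x y].

Definition connected (B : {set V}) :=
  forall x y, x \in B -> y \in B -> connect (restr adj B) x y.

Lemma restr_sym B : symmetric (restr adj B).
Proof. by move=> x y; rewrite /restr /= adj_sym andbCA. Qed.

Lemma connect_restr_sym B : connect_sym (restr adj B).
Proof. exact/sym_connect_sym/restr_sym. Qed.

Lemma restr_pathE B x p : x \in B ->
  path (restr adj B) x p = path adj x p && all [in B] p.
Proof.
elim: p x => [|y p IH] x xB //=; rewrite /restr /= xB /=.
by case yB : (y \in B); rewrite /= ?andbF // IH // andbA.
Qed.

Lemma restrS A B : A \subset B -> subrel (restr adj A) (restr adj B).
Proof. by move=> sAB x y /and3P[xA yA xy]; rewrite /restr /= xy !(subsetP sAB). Qed.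

Lemma connect_restrS A B x y : A \subset B ->
  connect (restr adj A) x y -> connect (restr adj B) x y.
Proof. by move=> sAB; apply: connect_sub => u w /(restrS sAB)/connect1. Qed.

Lemma connected_setT : (forall x y, connect adj x y) -> connected [set: V].
Proof.
move=> adj_conn x y _ _; rewrite (@eq_connect _ _ adj) // => u w.
by rewrite /restr /= !inE.
Qed.

Lemma comp_self B x : x \in B -> x \in component B x.
Proof. by move=> xB; rewrite inE xB connect0. Qed.

Lemma comp_sub B x : component B x \subset B.
Proof. by apply/subsetP => y; rewrite inE => /andP[]. Qed.

Lemma comp_eq B x y : y \in component B x -> component B y = component B x.
Proof.
rewrite inE => /andP[_ xy]; apply/setP => z.
by rewrite !inE (same_connect (connect_restr_sym B) xy).
Qed.

Lemma comps_memE B K x : K \in comps adj B -> x \in K -> K = component B x.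
Proof. by case/imsetP => y _ -> /comp_eq ->. Qed.

Lemma comps_sub B K : K \in comps adj B -> K \subset B.
Proof. by case/imsetP => x _ ->; apply: comp_sub. Qed.

Lemma comp_closed B x y z : y \in component B x -> restr adj B y z -> z \in component B x.
Proof.
rewrite !inE => /andP[_ xy] yz; case/and3P: (yz) => _ -> _.
exact: connect_trans xy (connect1 yz).
Qed.

Lemma comp_connected B x : x \in B -> connected (component B x).
Proof.
move=> xB; set C := component B x.
suff cx y : y \in C -> connect (restr adj C) x y.
  move=> y z /cx xy /cx xz; rewrite connect_restr_sym in xy.
  exact: connect_trans xy xz.
rewrite inE => /andP[_ /connectP[p pth ->]]; apply/connectP; exists p => //.
have xC : x \in C := comp_self xB.
elim: p (x) xC pth => [|w p IH] z zC //= /andP[zw pth].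
have wC : w \in C := comp_closed zC zw.
by case/and3P: zw => _ _ zw; rewrite /restr /= zC wC zw IH.
Qed.

Lemma comps_connected B K : K \in comps adj B -> connected K.
Proof. by case/imsetP => x xB ->; apply: comp_connected. Qed.

Lemma last_path_avoiding A w u p : u \in A :\ w -> w \notin p ->
  path (restr adj A) u p -> last u p \in component (A :\ w) u.
Proof.
move=> uAw wp; have uA : u \in A by case/setD1P: uAw.
rewrite restr_pathE // => /andP[pth pA].
have pAw : all [in A :\ w] p.
  apply/allP => y yp; rewrite !inE (allP pA y yp) andbT.
  by apply: contraNneq wp => <-.
rewrite inE; apply/andP; split.
  by have := mem_last u p; rewrite inE => /predU1P[-> // | /(allP pAw)].
by apply/connectP; exists p; rewrite // restr_pathE // pth.
Qed.

Lemma comp_exit_nbr B v y : v \in B -> y \in B :\ v ->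
  connect (restr adj B) y v -> exists2 u, u \in component (B :\ v) y & adj u v.
Proof.
move=> vB yBv; set C := component _ y; have yC : y \in C := comp_self yBv.
case/connectP => p; elim: p (y) yC => [|z p IH] x xC /=.
  by move=> _ vx; have := subsetP (comp_sub _ _) x xC; rewrite -vx !inE eqxx.
case/andP => /and3P[_ zB xz] pth vE.
have [zv | znv] := eqVneq z v; first by exists x; rewrite // -zv.
apply: IH pth vE; apply: (comp_closed xC).
by rewrite /restr /= (subsetP (comp_sub _ _) x xC) !inE znv zB.
Qed.

Lemma uniq_path_through_cut A w u v : connected A -> u \in A :\ w -> v \in A ->
  v \notin component (A :\ w) u ->
  exists p, [/\ path (restr adj A) u p, last u p = v, uniq (u :: p) & w \in p].
Proof.
move=> Ac uAw vA vC; have uA : u \in A by case/setD1P: uAw.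
have /connectP[p0 /shortenP[p pth up _] vE] := Ac _ _ uA vA.
exists p; split => //; apply: contraNT vC => wp.
by rewrite vE; apply: last_path_avoiding.
Qed.

End InducedSubgraphs.

Section Centroids.
Variables (V : finType) (adj : rel V).
Hypothesis adj_sym : symmetric adj.
Hypothesis adj_acyclic : forall s : seq V, uniq s -> 2 < size s -> ~~ cycle adj s.
Implicit Types (B K : {set V}) (u v w x y z : V).

Lemma nbrs_disconnected B v x y : v \notin B -> x \in B -> x != y ->
  adj v x -> adj v y -> ~~ connect (restr adj B) x y.
Proof.
move=> vB xB xy vx vy; apply/negP => /connectP[p0 /shortenP[p + up _] yE].
rewrite restr_pathE // => /andP[pth pB].
apply: (negP (adj_acyclic (s := v :: x :: p) _ _)).
- rewrite cons_uniq up andbT inE negb_or; apply/andP; split.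
    by apply: contraNneq vB => ->.
  by apply: contraNN vB => /(allP pB).
- by case: p {pth up pB} yE => [/= yx | //]; rewrite yx eqxx in xy.
- by rewrite /cycle /= rcons_path vx pth -yE adj_sym vy.
Qed.

Section CentroidStep.
Variables (S : {set V}) (v u : V) (K : {set V}).
Hypotheses (S_connected : connected adj S) (vS : v \in S).
Hypotheses (K_comp : K \in comps adj (S :\ v)) (uK : u \in K) (uv : adj u v).

Let K_sub : K \subset S :\ v := comps_sub K_comp.
Let uSv : u \in S :\ v := subsetP K_sub u uK.
Let u_neq_v : u != v. Proof. by case/setD1P: uSv. Qed.
Let vSu : v \in S :\ u. Proof. by rewrite !inE vS andbT eq_sym. Qed.

Lemma comps_sub_setD K' : K' \in comps adj (S :\ u) -> v \in K' -> K' \subset S :\: K.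
Proof.
move=> K'C vK'; apply/subsetP => z zK'.
have /setD1P[zu zS] := subsetP (comps_sub K'C) z zK'.
rewrite inE zS andbT; apply/negP => zK.
have zSv : z \in (S :\ u) :\ v.
  by have /setD1P[zv _] := subsetP K_sub z zK; rewrite !inE zu zS zv.
have zv : connect (restr adj (S :\ u)) z v.
  by move: vK'; rewrite (comps_memE adj_sym K'C zK') inE => /andP[].
have [w wC wv] := comp_exit_nbr vSu zSv zv.
have /setD1P[_ /setD1P[wu _]] := subsetP (comp_sub _ _ _) w wC.
have vSv : v \notin S :\ v by rewrite !inE eqxx.
have uw : u != w by rewrite eq_sym.
have vu : adj v u by rewrite adj_sym.
have vw : adj v w by rewrite adj_sym.
have /negP := nbrs_disconnected vSv uSv uw vu vw.
apply; apply: (@connect_trans _ _ z).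
  by move: zK; rewrite (comps_memE adj_sym K_comp uK) inE => /andP[].
move: wC; rewrite inE => /andP[_]; apply: connect_restrS.
by apply/subsetP => q; rewrite !inE => /andP[-> /andP[_ ->]].
Qed.

Lemma comps_sub_setD1 K' : K' \in comps adj (S :\ u) -> v \notin K' -> K' \subset K :\ u.
Proof.
move=> K'C vK'; apply/subsetP => z zK'.
have /setD1P[zu zS] := subsetP (comps_sub K'C) z zK'.
have zSv : z \in S :\ v by rewrite !inE zS andbT; apply: contraNneq vK' => <-.
rewrite !inE zu /=; apply: contraNT vK' => zK.
have [uC | uC] := boolP (u \in component adj (S :\ v) z).
  by rewrite (comps_memE adj_sym K_comp uK) (comp_eq adj_sym uC) comp_self in zK.
have CSu : component adj (S :\ v) z \subset S :\ u.
  apply/subsetP => q qC; have /setD1P[_ qS] := subsetP (comp_sub _ _ _) q qC.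
  by rewrite !inE qS andbT; apply: contraNneq uC => <-.
have [w wC wv] := comp_exit_nbr vS zSv (S_connected (subsetP (subsetDl _ _) z zSv) vS).
rewrite (comps_memE adj_sym K'C zK') inE vSu /=.
have zw := comp_connected adj_sym zSv (comp_self adj zSv) wC.
apply: connect_trans (connect_restrS CSu zw) (connect1 _).
by rewrite /restr /= (subsetP CSu w wC) vSu wv.
Qed.

Lemma comps_card_lt K' : K' \in comps adj (S :\ u) -> #|S| < 2 * #|K| -> #|K'| < #|K|.
Proof.
move=> K'C SK; have [vK' | vK'] := boolP (v \in K').
  have KS : K \subset S := subset_trans K_sub (subsetDl _ _).
  have := subset_leq_card (comps_sub_setD K'C vK').
  by rewrite cardsD (setIidPr KS); lia.
have := subset_leq_card (comps_sub_setD1 K'C vK').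
by have := cardsD1 u K; rewrite uK; lia.
Qed.

End CentroidStep.

Lemma centroid_exists S x0 : connected adj S -> x0 \in S ->
  exists2 v, v \in S & forall K, K \in comps adj (S :\ v) -> 2 * #|K| <= #|S|.
Proof.
(* A minimiser v of the largest component size is a centroid: if a component
   K of S - v were too large, its neighbour u of v would do better, since
   every component of S - u is smaller than K (comps_card_lt). *)
move=> Sc x0S; pose maxcomp v := \max_(K in comps adj (S :\ v)) #|K|.
have [v vS vmin] := arg_minnP maxcomp x0S.
exists v => // K KC; rewrite leqNgt; apply/negP => SK.
have [y yK] : exists y, y \in K by case/imsetP: KC => y yS ->; exists y; apply: comp_self.
have ySv := subsetP (comps_sub KC) y yK.
have [u uK uv] : exists2 u, u \in K & adj u v.
  rewrite (comps_memE adj_sym KC yK); apply: comp_exit_nbr => //.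
  by apply: Sc => //; case/setD1P: ySv.
have uS : u \in S by case/setD1P: (subsetP (comps_sub KC) u uK).
have Kv : #|K| <= maxcomp v by exact: leq_bigmax_cond.
have Ku : maxcomp u <= #|K|.-1.
  apply/bigmax_leqP => K' K'C; have := comps_card_lt Sc vS KC uK uv K'C SK; lia.
have := vmin u uS; have : 0 < #|K| by apply/card_gt0P; exists u.
lia.
Qed.

End Centroids.

Lemma InP (T : eqType) (x : T) s : reflect (List.In x s) (x \in s).
Proof.
elim: s => [|y s IH] /=; first by constructor.
by rewrite inE; apply: (iffP predU1P) => [[->|/IH]|[->|/IH]]; auto.
Qed.

Lemma all_InP (T : Type) (f : pred T) s : reflect (forall x, List.In x s -> f x) (all f s).
Proof.
elim: s => [|y s IH] /=; first by constructor.
apply: (iffP andP) => [[fy /IH fs] x [<- //|/fs //] | fs].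
by split; [apply: fs; left | apply/IH => x xs; apply: fs; right].
Qed.

Lemma flatten_map_nil (T W : Type) (f : T -> seq W) s :
  (forall t, List.In t s -> nilp (f t)) -> flatten (map f s) = [::].
Proof.
elim: s => //= t s IH ft.
by rewrite (nilP (ft t (or_introl erefl))) IH // => t' ht'; apply: ft; right.
Qed.

Lemma flatten_map_single (T W : Type) (U : eqType) (g : T -> U) (f : T -> seq W) s t :
  uniq (map g s) -> List.In t s ->
  (forall t', List.In t' s -> ~~ nilp (f t') -> g t' = g t) ->
  flatten (map f s) = f t.
Proof.
have g_in t' s' : List.In t' s' -> g t' \in map g s' by move=> ht'; apply/InP/List.in_map.
elim: s => // t0 s IH /= /andP[gt0 us] [<- | ht] ft.
  rewrite flatten_map_nil ?cats0 // => t' ht'; apply: contraNT gt0 => ft'.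
  by rewrite -(ft t' (or_intror ht') ft') g_in.
have -> : f t0 = [::].
  apply/nilP; apply: contraNT gt0 => ft0.
  by rewrite (ft t0 (or_introl erefl) ft0) g_in.
by apply: IH => // t' ht'; apply: ft; right.
Qed.

Section DecisionTrees.
Variables (V : finType) (adj : rel V).
Hypothesis adj_sym : symmetric adj.
Implicit Types (A : {set V}) (D d : dtree V) (ch : seq (dtree V)) (v x : V).

Definition dtree_nested_ind (Q : dtree V -> Prop)
    (IH : forall v ch, (forall d, List.In d ch -> Q d) -> Q (Node v ch)) :
    forall D, Q D :=
  fix F D := let: Node v ch := D in
    IH v ch ((fix G ch : forall d, List.In d ch -> Q d :=
      if ch is d0 :: ch' then fun d hd =>
        match hd with
        | or_introl E => match E in _ = d1 return Q d1 with erefl => F d0 end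
        | or_intror hd' => G ch' d hd'
        end
      else fun d hd => match hd with end) ch).

Variable P : V -> {set V} -> bool.

Lemma dtree_ok_root A v ch : dtree_ok adj P A (Node v ch) -> v \in A /\ P v A.
Proof. by case/and4P. Qed.

Lemma dtree_ok_child A v ch d : dtree_ok adj P A (Node v ch) -> List.In d ch ->
  dset d \in comps adj (A :\ v) /\ dtree_ok adj P (dset d) d.
Proof.
case/and4P => _ _ pe /all_InP ok_ch hd; split; last exact: ok_ch.
by rewrite -mem_enum -(perm_mem pe); apply/InP/List.in_map.
Qed.

Lemma dtree_ok_cover A v ch x : dtree_ok adj P A (Node v ch) -> x \in A :\ v ->
  exists2 d, List.In d ch & x \in dset d.
Proof.
case/and4P => _ _ pe _ xAv.
have /InP/List.in_map_iff[d [dE hd]] : component adj (A :\ v) x \in map (@dset V) ch.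
  by rewrite (perm_mem pe) mem_enum; apply/imsetP; exists x.
by exists d; rewrite // dE comp_self.
Qed.

Lemma dset_dtree_ok A D : dtree_ok adj P A D -> dset D = A.
Proof.
case: D => v ch ok; have [vA _] := dtree_ok_root ok; apply/setP => x.
rewrite inE /= inE; have [-> // | xv] := eqVneq x v; apply/flattenP/idP.
  case=> _ /InP/List.in_map_iff[d [<- hd]] xd.
  have [dC _] := dtree_ok_child ok hd; have xd' : x \in dset d by rewrite inE.
  by have /setD1P[] := subsetP (comps_sub dC) x xd'.
move=> xA; have [|d hd xd] := dtree_ok_cover ok (x := x); first by rewrite !inE xv.
by exists (dverts d); [apply/InP/List.in_map | rewrite inE in xd].
Qed.

Lemma dpath_childE A v ch d x : dtree_ok adj P A (Node v ch) -> List.In d ch ->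
  x \in dset d -> dpath (Node v ch) x = v :: dpath d x.
Proof.
move=> ok hd xd; have [dC _] := dtree_ok_child ok hd.
have /setD1P[xv _] := subsetP (comps_sub dC) x xd.
rewrite /= eq_sym (negPf xv) (flatten_map_single (g := @dset V) _ hd).
- by rewrite inE in xd; rewrite xd.
- by case/and4P: ok => _ _ pe _; rewrite (perm_uniq pe) enum_uniq.
move=> d' hd'; case: ifP => // xd' _; have [d'C _] := dtree_ok_child ok hd'.
by rewrite (comps_memE adj_sym d'C (x := x)) ?inE // (comps_memE adj_sym dC xd).
Qed.

Lemma dpath_nonroot A v ch x : dtree_ok adj P A (Node v ch) -> x \in A -> x != v ->
  exists2 d, List.In d ch & [/\ dset d \in comps adj (A :\ v),
    dtree_ok adj P (dset d) d, x \in dset d & dpath (Node v ch) x = v :: dpath d x].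
Proof.
move=> ok xA xv; have [|d hd xd] := dtree_ok_cover ok (x := x); first by rewrite !inE xv.
have [dC ok_d] := dtree_ok_child ok hd.
by exists d => //; split; rewrite // (dpath_childE ok hd xd).
Qed.

Lemma dpath_self A D x : dtree_ok adj P A D -> x \in A -> x \in dpath D x.
Proof.
elim/dtree_nested_ind: D A => v ch IH A ok xA.
have [-> | xv] := eqVneq x v; first by rewrite /= eqxx mem_head.
have [d hd [_ ok_d xd ->]] := dpath_nonroot ok xA xv.
by rewrite inE (IH d hd _ ok_d xd) orbT.
Qed.

Lemma dpath_sub A D x : dtree_ok adj P A D -> x \in A -> {subset dpath D x <= A}.
Proof.
elim/dtree_nested_ind: D A => v ch IH A ok xA y.
have [vA _] := dtree_ok_root ok.
have [-> | xv] := eqVneq x v; first by rewrite /= eqxx inE => /eqP ->.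
have [d hd [dC ok_d xd ->]] := dpath_nonroot ok xA xv.
rewrite inE => /predU1P[-> // | /(IH d hd _ ok_d xd)].
by move/(subsetP (comps_sub dC)) => /setD1P[].
Qed.

End DecisionTrees.

Section BalancedDecisionTrees.
Variables (V : finType) (adj : rel V).
Hypothesis adj_sym : symmetric adj.
Hypothesis adj_acyclic : forall s : seq V, uniq s -> 2 < size s -> ~~ cycle adj s.

Lemma dtrees_of_sets (Q : dtree V -> Prop) (s : seq {set V}) :
  (forall K, K \in s -> exists D, is_dtree adj K D /\ Q D) ->
  exists ch, map (@dset V) ch = s /\ forall d, List.In d ch -> is_dtree adj (dset d) d /\ Q d.
Proof.
elim: s => [|K s IH] hs; first by exists [::].
have [d [ok_d Qd]] := hs K (mem_head K s).
have [|ch [chE ok_ch]] := IH; first by move=> K' K's; apply: hs; rewrite inE K's orbT.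
exists (d :: ch); rewrite /= chE (dset_dtree_ok ok_d); split => // d' [<- | /ok_ch //].
by rewrite (dset_dtree_ok ok_d).
Qed.

Lemma dtree_depth_log m S : connected adj S -> S != set0 -> #|S| < 2 ^ m ->
  exists D, is_dtree adj S D /\ forall x, x \in S -> size (dpath D x) <= m.
Proof.
elim: m S => [|m IH] S Sc /set0Pn[x0 x0S] Sm.
  by move: Sm; rewrite expn0 ltnS leqn0 cards_eq0 => /eqP S0; rewrite S0 inE in x0S.
have [v vS v_centroid] := centroid_exists adj_sym adj_acyclic Sc x0S.
pose shallow (d : dtree V) := forall x, x \in dset d -> size (dpath d x) <= m.
have [|ch [chE ok_ch]] := @dtrees_of_sets shallow (enum (comps adj (S :\ v))).
  move=> K; rewrite mem_enum => KC.
  have [||D [ok_D depth_D]] := IH K (comps_connected adj_sym KC).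
  - by case/imsetP: KC => y yS ->; apply/set0Pn; exists y; apply: comp_self.
  - by move: (v_centroid K KC) Sm; rewrite expnS; lia.
  by exists D; rewrite /shallow (dset_dtree_ok ok_D).
have ok : is_dtree adj S (Node v ch).
  by rewrite /is_dtree /= vS chE perm_refl; apply/all_InP => d /ok_ch[].
exists (Node v ch); split => // x xS; have [-> | xv] := eqVneq x v; first by rewrite /= eqxx.
have [d hd [_ _ xd ->]] := dpath_nonroot adj_sym ok xS xv.
exact: (ok_ch d hd).2 x xd.
Qed.

End BalancedDecisionTrees.

Section RankingsFromDecisionTrees.
Variables (V : finType) (adj : rel V).
Hypothesis adj_sym : symmetric adj.
Variables (P : V -> {set V} -> bool) (S : {set V}).
Implicit Types (A : {set V}) (D : dtree V) (u v w x z : V).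

Definition dcount D x := count [in S] (dpath D x).

Lemma dcount_gt0 A D x : dtree_ok adj P A D -> x \in A -> x \in S -> 0 < dcount D x.
Proof.
move=> ok xA xS; rewrite -has_count; apply/hasP.
by exists x; rewrite ?(dpath_self adj_sym ok xA).
Qed.

Lemma dcount_root v ch : dcount (Node v ch) v = (v \in S).
Proof. by rewrite /dcount /= eqxx /= addn0. Qed.

Lemma dcount_childE A v ch d x : dtree_ok adj P A (Node v ch) -> List.In d ch ->
  x \in dset d -> dcount (Node v ch) x = (v \in S) + dcount d x.
Proof. by move=> ok hd xd; rewrite /dcount (dpath_childE adj_sym ok hd xd). Qed.

Lemma eq_dcount_path A D u v : dtree_ok adj P A D -> connected adj A ->
    u \in A -> v \in A -> u \in S -> v \in S -> u != v -> dcount D u = dcount D v ->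
  exists p z, [/\ path (restr adj A) u p, last u p = v, uniq (u :: p),
                  (z \in p) && (z != v) & (z \notin S) || (dcount D z < dcount D v)].
Proof.
elim/dtree_nested_ind: D A u v => w ch IH A u v ok Ac uA vA uS vS uv.
have [uw | uw] := eqVneq u w.
  subst u; rewrite eq_sym in uv; have [d hd [_ ok_d vd _]] := dpath_nonroot adj_sym ok vA uv.
  rewrite dcount_root (dcount_childE ok hd vd) uS.
  by have := dcount_gt0 ok_d vd vS; lia.
have [vw | vw] := eqVneq v w.
  subst v; have [d hd [_ ok_d ud _]] := dpath_nonroot adj_sym ok uA uw.
  rewrite dcount_root (dcount_childE ok hd ud) vS.
  by have := dcount_gt0 ok_d ud uS; lia.
have [d hd [dC ok_d ud _]] := dpath_nonroot adj_sym ok uA uw.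
have [vd | vd] := boolP (v \in dset d).
  rewrite !(dcount_childE ok hd) // => /addnI Euv.
  have [p [z [pth pv up /andP[zp zv] zS]]] :=
    IH d hd _ u v ok_d (comps_connected adj_sym dC) ud vd uS vS uv Euv.
  have /andP[_ pd] : path adj u p && all [in dset d] p by rewrite -restr_pathE.
  have dA : dset d \subset A := subset_trans (comps_sub dC) (subsetDl _ _).
  have pthA := sub_path (restrS dA) pth.
  exists p, z; split; rewrite ?zp ?zv //.
  by rewrite !(dcount_childE ok hd) ?(allP pd) // ltn_add2l.
have uAw : u \in A :\ w by rewrite !inE uw.
have vC : v \notin component adj (A :\ w) u by rewrite -(comps_memE adj_sym dC ud).
have [p [pth pv up wp]] := uniq_path_through_cut Ac uAw vA vC.
have [d' hd' [_ ok_d' vd' _]] := dpath_nonroot adj_sym ok vA vw.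
move=> _; exists p, w; split => //; first by rewrite wp eq_sym vw.
rewrite dcount_root (dcount_childE ok hd' vd').
by have := dcount_gt0 ok_d' vd' vS; case: (w \in S); rewrite //= add1n ltnS.
Qed.

Definition dlabel D m x := if x \in S then m.+1 - dcount D x else m.+1.

Section DtreeLabels.
Variables (A : {set V}) (D : dtree V) (m : nat).
Hypotheses (ok : dtree_ok adj P A D) (A_connected : connected adj A) (SA : S \subset A).
Hypothesis dcount_le : {in S, forall x, dcount D x <= m}.

Let dcount_pos x : x \in S -> 0 < dcount D x.
Proof. by move=> xS; apply: dcount_gt0 ok (subsetP SA x xS) xS. Qed.

Lemma dlabel_ranking : is_ranking adj S (dlabel D m).
Proof.
split=> [x xS | u v uS vS uv]; rewrite /dlabel ?uS ?vS.
  by rewrite xS subn_gt0 ltnS dcount_le.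
move=> Euv; have {Euv}Euv : dcount D u = dcount D v.
  by move: Euv (dcount_le uS) (dcount_le vS) (dcount_pos uS) (dcount_pos vS); lia.
have [p [z [pth pv up zpv zS]]] :=
  eq_dcount_path ok A_connected (subsetP SA u uS) (subsetP SA v vS) uS vS uv Euv.
exists p, z; split => //; first by apply: sub_path pth => x y /and3P[].
have := dcount_le vS; have := dcount_pos vS.
by case: (z \in S) zS => /=; lia.
Qed.

Lemma nlabels_dlabel : nlabels S (dlabel D m) <= m.
Proof.
rewrite /nlabels -[leqRHS](size_iota 1); apply: uniq_leq_size; first exact: undup_uniq.
move=> _ /[!mem_undup] /mapP[x /[!mem_enum] xS ->].
by rewrite mem_iota /dlabel xS; have := dcount_le xS; have := dcount_pos xS; lia.
Qed.

End DtreeLabels.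

Lemma opt_ranking_nlabels_le l A D m : is_opt_ranking adj S l ->
  dtree_ok adj P A D -> connected adj A -> S \subset A ->
  {in S, forall x, dcount D x <= m} -> nlabels S l <= m.
Proof.
move=> [_ l_min] ok Ac SA le_m.
exact: leq_trans (l_min _ (dlabel_ranking ok Ac SA le_m)) (nlabels_dlabel ok SA le_m).
Qed.

End RankingsFromDecisionTrees.

Section RankingDecisionTreeDepth.
Variables (V : finType) (adj : rel V) (l : V -> nat).
Hypothesis adj_sym : symmetric adj.

Lemma nlabels_ltS (A B : {set V}) v : v \in A -> B \subset A ->
  {in B, forall y, l y < l v} -> (nlabels B l).+1 <= nlabels A l.
Proof.
move=> vA sBA lt_v; rewrite /nlabels -[_.+1]/(size (l v :: _)).
apply: uniq_leq_size => [|k].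
  rewrite /= undup_uniq andbT mem_undup; apply/mapP => -[y /[!mem_enum] yB lvy].
  by have := lt_v y yB; rewrite -lvy ltnn.
rewrite inE !mem_undup => /predU1P[-> | /mapP[y /[!mem_enum] yB ->]].
  by rewrite map_f ?mem_enum.
by rewrite map_f ?mem_enum ?(subsetP sBA).
Qed.

Lemma size_dpath_rank A D x : is_rank_dtree adj l A D -> x \in A ->
  size (dpath D x) <= nlabels A l.
Proof.
elim/dtree_nested_ind: D A => v ch IH A ok xA.
have [vA /forall_inP lt_v] := dtree_ok_root ok.
have [-> | xv] := eqVneq x v.
  rewrite /= eqxx /nlabels -has_predT has_undup has_map.
  by apply/hasP; exists v; rewrite ?mem_enum.
have [d hd [dC ok_d xd ->]] := dpath_nonroot adj_sym ok xA xv.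
apply: leq_trans (nlabels_ltS vA (subset_trans (comps_sub dC) (subsetDl _ _)) _) => [|y yd].
  exact: IH d hd _ ok_d xd.
have /setD1P[yv yA] := subsetP (comps_sub dC) y yd.
by have := lt_v y yA; rewrite yv.
Qed.

End RankingDecisionTreeDepth.

Section SeqSums.
Variables (R : numDomainType) (T : finType) (c : T -> R).
Local Open Scope ring_scope.

Lemma sum_le_size (b : R) (s : seq T) :
  {in s, forall x, c x <= b} -> \sum_(x <- s) c x <= b * (size s)%:R.
Proof.
elim: s => [|x s IH] le_b; first by rewrite big_nil mulr0.
rewrite big_cons /= -add1n natrD mulrDr mulr1 lerD ?le_b ?mem_head //.
by apply: IH => y ys; apply: le_b; rewrite inE ys orbT.
Qed.

Hypothesis c_ge0 : forall x, 0 <= c x.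

Lemma sum_ge_count (a : R) (S : {set T}) (s : seq T) :
  {in S, forall x, a <= c x} -> a * (count [in S] s)%:R <= \sum_(x <- s) c x.
Proof.
move=> ge_a; elim: s => [|x s IH]; first by rewrite big_nil mulr0.
rewrite big_cons /= natrD mulrDr lerD //.
by case: (boolP (x \in S)) => xS; rewrite ?mulr1 ?mulr0 ?ge_a.
Qed.

Lemma le_sum_mem (s : seq T) x : x \in s -> c x <= \sum_(u <- s) c u.
Proof. by move=> xs; rewrite (big_rem x) //= lerDl sumr_ge0. Qed.

End SeqSums.

Section DecisionTreeCosts.
Variables (R : realType) (V : finType) (c : V -> R).
Local Open Scope ring_scope.
Implicit Types (A : {set V}) (D : dtree V).

Lemma le_dcost A D x : x \in A -> \sum_(u <- dpath D x) c u <= dcost c A D.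
Proof. by move=> xA; apply: le_bigmax_cond. Qed.

Lemma le_dcost_vertex adj P A D x : symmetric adj -> (forall u, 0 <= c u) ->
  dtree_ok adj P A D -> x \in A -> c x <= dcost c A D.
Proof.
move=> adj_sym c_ge0 ok xA; apply: le_trans (le_dcost D xA).
exact: le_sum_mem c_ge0 _ _ (dpath_self adj_sym ok xA).
Qed.

Lemma dcost_le A D (M : R) : 0 <= M ->
  (forall x, x \in A -> \sum_(u <- dpath D x) c u <= M) -> dcost c A D <= M.
Proof. by move=> M0 le_M; apply: bigmax_le. Qed.

End DecisionTreeCosts.

Lemma trunc_log2_le_ln (R : realType) n : 0 < n ->
  ((trunc_log 2 n)%:R <= ln (n%:R : R) / ln 2)%R.
Proof.
move=> n_gt0; have ln2_gt0 : (0 < ln (2 : R))%R by rewrite ln_gt0 // ltr1n.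
rewrite ler_pdivlMr // mulr_natl -lnXn // ler_ln ?posrE ?exprn_gt0 ?ltr0n //.
by rewrite -natrX ler_nat trunc_logP.
Qed.

Section RankingBasedCost.
Variables (R : realType) (V : finType) (adj : rel V) (c : V -> R).
Hypothesis adj_sym : symmetric adj.
Hypothesis c_ge0 : forall v, (0 <= c v)%R.
Variables (S : {set V}) (l : V -> nat).
Hypotheses (S_connected : connected adj S) (S_neq0 : S != set0).
Hypothesis l_opt : is_opt_ranking adj S l.
Local Open Scope ring_scope.

Lemma rank_dtree_cost (b : R) D : 0 <= b -> {in S, forall x, c x <= b} ->
  is_rank_dtree adj l S D -> dcost c S D <= b * (nlabels S l)%:R.
Proof.
move=> b_ge0 le_b ok; apply: dcost_le => [|x xS]; first by rewrite mulr_ge0.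
apply: le_trans (sum_le_size (b := b) _) _ => [u /(dpath_sub adj_sym ok xS)/le_b //|].
by apply: ler_wpM2l => //; rewrite ler_nat (size_dpath_rank adj_sym ok xS).
Qed.

Lemma opt_ranking_le_dcount P A D' : dtree_ok adj P A D' -> connected adj A -> S \subset A ->
  exists2 x, x \in S & (nlabels S l <= dcount S D' x)%N.
Proof.
move=> ok Ac SA; have /set0Pn[x0 x0S] := S_neq0.
have [x xS x_max] := arg_maxnP (dcount S D') x0S.
by exists x; last exact: opt_ranking_nlabels_le l_opt ok Ac SA x_max.
Qed.

Lemma rank_dtree_cost_le_uniform (a : R) A D D' : 0 <= a ->
  {in S, forall x, a <= c x <= 2 * a} -> is_rank_dtree adj l S D ->
  is_dtree adj A D' -> connected adj A -> S \subset A ->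
  dcost c S D <= 2 * dcost c A D'.
Proof.
move=> a_ge0 c_bnd ok ok' Ac SA.
have [x xS k_le] := opt_ranking_le_dcount ok' Ac SA.
have le_2a : {in S, forall x, c x <= 2 * a} by move=> y /c_bnd/andP[].
apply: le_trans (rank_dtree_cost (mulr_ge0 _ a_ge0) le_2a ok) _ => //.
rewrite -mulrA; apply: ler_wpM2l => //; apply: le_trans (le_dcost c D' (subsetP SA x xS)).
have ge_a : {in S, forall y, a <= c y} by move=> y /c_bnd/andP[].
apply: le_trans (sum_ge_count c_ge0 (dpath D' x) ge_a).
by apply: ler_wpM2l => //; rewrite ler_nat.
Qed.

Hypothesis adj_acyclic : forall s : seq V, uniq s -> (2 < size s)%N -> ~~ cycle adj s.

Lemma opt_ranking_le_log : (nlabels S l <= (trunc_log 2 #|S|).+1)%N.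
Proof.
have [D [ok depth]] := dtree_depth_log adj_sym adj_acyclic S_connected S_neq0
  (trunc_log_ltn #|S| (isT : (1 < 2)%N)).
have le_m : {in S, forall x, (dcount S D x <= (trunc_log 2 #|S|).+1)%N}.
  by move=> x xS; rewrite /dcount (leq_trans (count_size _ _) (depth x xS)).
exact: opt_ranking_nlabels_le l_opt ok S_connected (subxx S) le_m.
Qed.

Lemma rank_dtree_cost_le_log (b : R) D : 0 <= b <= 1 -> {in S, forall x, c x <= b} ->
  b * (trunc_log 2 #|S|)%:R <= 1 -> is_rank_dtree adj l S D -> dcost c S D <= 2.
Proof.
move=> /andP[b_ge0 b_le1] le_b b_log ok.
apply: le_trans (rank_dtree_cost b_ge0 le_b ok) _.
have k_le : (nlabels S l)%:R <= (trunc_log 2 #|S|).+1%:R :> R.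
  by rewrite ler_nat opt_ranking_le_log.
apply: le_trans (ler_wpM2l b_ge0 k_le) _.
by rewrite -natr1 mulrDr mulr1; lra.
Qed.

End RankingBasedCost.

Theorem lemma9 (R : realType) (V : finType) (adj : rel V) (c : V -> R)
    (S : {set V}) (a b : R) (l : V -> nat) (D : dtree V) :
  is_tree adj ->
  (forall v, (0 < c v)%R) ->
  (forall v, (c v <= 1)%R) -> (exists v, c v = 1%R) ->
  is_subtree adj S ->
  (0 < a)%R -> (a < b)%R ->
  (forall v, v \in S -> (c v <= b)%R) ->
  (b <= 2 * a)%R ->
  ((b * (ln (#|V|%:R : R) / ln 2) <= 1)%R \/ (forall v, v \in S -> (a < c v)%R)) ->
  is_opt_ranking adj S l ->
  is_rank_dtree adj l S D ->
  forall D' : dtree V, is_dtree adj [set: V] D' ->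
  (dcost c S D <= 2 * dcost c [set: V] D')%R.
Proof.
move=> [adj_sym _ adj_conn adj_acyclic] c_gt0 c_le1 [v1 c_v1] [S_neq0 S_conn]
  a_gt0 lt_ab le_cb le_b2a S_cost l_opt ok D' ok'.
have c_ge0 v : (0 <= c v)%R by apply: ltW.
case: S_cost => [b_log | gt_ca]; last first.
  apply: (rank_dtree_cost_le_uniform adj_sym c_ge0 S_neq0 l_opt (ltW a_gt0) _ ok ok'
    (connected_setT adj_conn) (subsetT S)).
  by move=> x xS; rewrite (ltW (gt_ca x xS)) (le_trans (le_cb x xS) le_b2a).
have opt_ge1 : (1 <= dcost c [set: V] D')%R.
  by rewrite -c_v1 (le_dcost_vertex adj_sym c_ge0 ok' (in_setT v1)).
suff cost_le2 : (dcost c S D <= 2)%R.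
  by apply: le_trans cost_le2 _; rewrite -[leLHS]mulr1; apply: ler_wpM2l.
have V_gt0 : 0 < #|V| by apply: leq_trans (max_card S); rewrite card_gt0.
have log_S : ((trunc_log 2 #|S|)%:R <= ln (#|V|%:R : R) / ln 2)%R.
  by apply: le_trans (trunc_log2_le_ln R V_gt0); rewrite ler_nat leq_trunc_log ?max_card.
have b1_bnd : (0 <= Num.min b 1 <= 1)%R.
  by rewrite le_min ge_min lexx orbT ler01 (ltW (lt_trans a_gt0 lt_ab)).
apply: (rank_dtree_cost_le_log adj_sym S_conn S_neq0 l_opt adj_acyclic b1_bnd) => //.
  by move=> x xS; rewrite le_min le_cb // c_le1.
apply: le_trans b_log; apply: ler_pM => //; first by case/andP: b1_bnd.
by rewrite ge_min lexx.
Qed.
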